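(* Let $\lambda>0$, $\lambda_{max}>0$, $p\in(0,1)$. Suppose $P_b\in[0,1)$ satisfies $$P_b=1-\exp\!\Big(-\frac{\lambda(1-P_b)\,r}{\lambda_{max}}\Big),\qquad r=\min\Big\{\frac{p}{1-P_b},1\Big\}.$$ If $\frac{-\lambda_{max}\ln p}{\lambda}>p$, then $P_b=1-\exp\!\big(-\frac{p\lambda}{\lambda_{max}}\big)$. Otherwise, $P_b$ satisfies $P_b=1-\exp\!\big(-\frac{\lambda(1-P_b)}{\lambda_{max}}\big)$.
   Context: CSMA model: packets arrive as a Poisson process and are assigned to transmitters uniformly located in a large area, yielding (in the limit) transmitter density $\lambda$ in $\mathbb{R}^2$; each receiver is at distance $d$ from its transmitter, path-loss exponent $\alpha>2$, Rayleigh fading, SIR threshold $\theta$, and $\lambda_{max}=\frac{1}{d^2\theta^{2/\alpha}\kappa(\alpha)}$ with $\kappa(\alpha)=\frac{2\pi^2}{\alpha\sin(2\pi/\alpha)}$. A transmitter sends (with unit power) if its sensed SIR exceeds $\theta$ and its battery (infinite capacity, one energy unit arriving per slot with probability $p$, i.i.d.) is nonempty; otherwise it backs off. $P_b$ is the back-off probability and $r$ the stationary probability of a nonempty battery. Under the modeling approximation that back-off events of different transmitters are independent, so that active transmitters form a Poisson point process of density $\lambda(1-P_b)r$, the back-off probability is a number $P_b\in[0,1)$ satisfying the displayed fixed-point equation. *)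

From Stdlib Require Import Reals.
Open Scope R_scope.

Definition battery_r (p Pb : R) : R := Rmin (p / (1 - Pb)) 1.

From Stdlib Require Import Reals Lra.
Open Scope R_scope.

(* With [x = 1 - Pb] and [a = lambda / lambda_max], the fixed-point equation
   reads [x = exp (- a * min (p, x))].  If the minimum is [x], the second
   alternative holds outright, and the first one is impossible because
   [p < exp (- a p) < exp (- a x) = x < p].  If the minimum is [p], then
   [x = exp (- a p)], which is the first alternative; when moreover
   [exp (- a p) <= p] this forces [x = p], so the minimum is also [x]. *)

Lemma Rmult_Rmin_div_1 (p x : R) : 0 < x -> x * Rmin (p / x) 1 = Rmin p x.
Proof.
  intro Hx; unfold Rmin.
  destruct (Rle_dec (p / x) 1) as [Hle|Hgt]; destruct (Rle_dec p x) as [Hle'|Hgt'].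
  - field; lra.
  - exfalso; apply Hgt'.
    apply Rmult_le_compat_r with (r := x) in Hle; [|lra].
    replace (p / x * x) with p in Hle by (field; lra); lra.
  - exfalso; apply Hgt.
    apply Rmult_le_reg_r with x; [lra|].
    replace (p / x * x) with p by (field; lra); lra.
  - lra.
Qed.

Lemma lt_exp_opp_iff (p y : R) : 0 < p -> (p < exp (- y) <-> y < - ln p).
Proof.
  intro Hp; rewrite <- (exp_ln p Hp) at 1; split; intro H.
  - apply exp_lt_inv in H; lra.
  - apply exp_increasing; lra.
Qed.

Lemma ln_threshold_iff (l m p : R) :
  0 < l -> 0 < m -> 0 < p ->
  (- m * ln p / l > p <-> p < exp (- (l / m * p))).
Proof.
  intros Hl Hm Hp; rewrite lt_exp_opp_iff by exact Hp.
  replace (- m * ln p / l) with ((m / l) * (- ln p)) by (field; lra).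
  assert (Hk : 0 < m / l) by (apply Rdiv_lt_0_compat; lra).
  assert (Hp_eq : p = (m / l) * (l / m * p)) by (field; lra).
  split; intro H.
  - apply Rmult_lt_reg_l with (m / l); lra.
  - apply Rmult_lt_compat_l with (r := m / l) in H; lra.
Qed.

Lemma exp_min_fixed_point_cases (a p x : R) :
  0 < a -> x = exp (- (a * Rmin p x)) ->
  (p < exp (- (a * p)) -> x = exp (- (a * p))) /\
  (exp (- (a * p)) <= p -> x = exp (- (a * x))).
Proof.
  intros Ha Hfix; unfold Rmin in Hfix.
  destruct (Rle_dec p x) as [Hpx|Hxp]; split; intro H; try exact Hfix.
  - replace x with p at 2 by lra; exact Hfix.
  - exfalso.
    assert (Hlt : exp (- (a * p)) < exp (- (a * x))) by (apply exp_increasing; nra).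
    lra.
Qed.

Theorem theorem5 (lambda lambda_max p Pb : R)
  (Hl : 0 < lambda) (Hlm : 0 < lambda_max) (Hp0 : 0 < p) (Hp1 : p < 1)
  (HPb0 : 0 <= Pb) (HPb1 : Pb < 1)
  (Hfix : Pb = 1 - exp (- (lambda * (1 - Pb) * battery_r p Pb / lambda_max))) :
  (- lambda_max * ln p / lambda > p ->
     Pb = 1 - exp (- (p * lambda / lambda_max))) /\
  (~ (- lambda_max * ln p / lambda > p) ->
     Pb = 1 - exp (- (lambda * (1 - Pb) / lambda_max))).
Proof.
  set (a := lambda / lambda_max).
  assert (Ha : 0 < a) by (apply Rdiv_lt_0_compat; lra).
  assert (Hx : 1 - Pb = exp (- (a * Rmin p (1 - Pb)))).
  { rewrite <- Rmult_Rmin_div_1 by lra.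
    replace (a * ((1 - Pb) * Rmin (p / (1 - Pb)) 1))
      with (lambda * (1 - Pb) * battery_r p Pb / lambda_max)
      by (unfold a, battery_r; field; lra).
    lra. }
  destruct (exp_min_fixed_point_cases a p (1 - Pb) Ha Hx) as [Hfirst Hsecond].
  rewrite (ln_threshold_iff lambda lambda_max p Hl Hlm Hp0).
  replace (p * lambda / lambda_max) with (a * p) by (unfold a; field; lra).
  replace (lambda * (1 - Pb) / lambda_max) with (a * (1 - Pb)) by (unfold a; field; lra).
  fold a; split; intro H.
  - rewrite <- Hfirst by exact H; lra.
  - rewrite <- Hsecond by (apply Rnot_lt_le; exact H); lra.
Qed.
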